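(* Let $\mathrm{Pol}=(\mathrm{Pol}_1,\mathrm{Pol}_2):\mathrm{SL}(2,\mathbb C)\to\mathrm{SL}(2,\mathbb C)^{++}\times\mathrm{SU}(2)$ be the polar decomposition $A=\mathrm{Pol}_1(A)\mathrm{Pol}_2(A)$. For all $A\in\mathrm{SL}(2,\mathbb C)$, $\|d\mathrm{Pol}_2(A)\|\le|A|$.
   Context: $\mathrm{SL}(2,\mathbb C)^{++}$ denotes the Hermitian positive definite elements of $\mathrm{SL}(2,\mathbb C)$. $|\cdot|$ is the Frobenius norm $|A|=(\sum_{i,j}|a_{ij}|^2)^{1/2}$ on $2\times2$ complex matrices (used on tangent spaces of $\mathrm{SL}(2,\mathbb C)$ and $\mathrm{SU}(2)$), and $\|d\mathrm{Pol}_2(A)\|$ is the corresponding operator norm of the differential. *)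

From HB Require Import structures.
From mathcomp Require Import all_boot all_order all_algebra.
From mathcomp Require Import all_classical all_reals all_analysis.
From mathcomp Require Import complex.
Set Implicit Arguments. Unset Strict Implicit. Unset Printing Implicit Defensive.
Import Order.TTheory GRing.Theory Num.Theory.
Import numFieldNormedType.Exports.
Local Open Scope ring_scope.
Local Open Scope classical_set_scope.

Section Defs.
Variable R : realType.

Definition ctmx m n (A : 'M[R[i]]_(m, n)) : 'M[R[i]]_(n, m) := (map_mx conjc A)^T.

Definition SL2 (A : 'M[R[i]]_2) : Prop := \det A = 1.

Definition herm_pd (P : 'M[R[i]]_2) : Prop :=
  ctmx P = P /\
  forall v : 'cV[R[i]]_2, v != 0 -> 0 < complex.Re ((ctmx v *m P *m v) 0 0).

Definition SL2pp (P : 'M[R[i]]_2) : Prop := SL2 P /\ herm_pd P.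

Definition SU2 (U : 'M[R[i]]_2) : Prop := ctmx U *m U = 1%:M /\ \det U = 1.

Definition frob (A : 'M[R[i]]_2) : R :=
  Num.sqrt (\sum_(i < 2) \sum_(j < 2) (complex.Re (A i j) ^+ 2 + complex.Im (A i j) ^+ 2)).

Definition has_deriv0 (g : R -> 'M[R[i]]_2) (V : 'M[R[i]]_2) : Prop :=
  (fun t : R => frob ((Complex t^-1 0) *: (g t - g 0) - V)) @ 0^' --> (0 : R).

Definition is_polar_decomp (Pol1 Pol2 : 'M[R[i]]_2 -> 'M[R[i]]_2) : Prop :=
  forall A, SL2 A -> [/\ SL2pp (Pol1 A), SU2 (Pol2 A) & A = Pol1 A *m Pol2 A].

End Defs.

(** Write [B X := X + (adj X)^*] for a 2x2 complex matrix [X].  If [A = P U] with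
    [P] Hermitian and [U] in SU(2), then [adj U = U^*] and [P + adj P = (tr P) I], so
    [B A = (tr P) U]; taking determinants, [(tr P)^2 = |A|^2 + 2 Re (det A) = |A|^2 + 2].
    Hence on SL(2,C) the unitary factor is given by the smooth formula
    [Pol2 A = B A / s(A)] with [s(A) = sqrt (|A|^2 + 2)], and along a curve through [A]
    with velocity [V] its velocity is [W = B V / s - <A, V> B A / s^3], where [<,>] is the
    real inner product of the Frobenius norm.  Expanding [|W|^2] with
    [|B X|^2 = 2 |X|^2 + 4 Re (det X)] and [<B V, B A> = 2 <A, V> + 2 <(adj A)^*, V>], the
    bound [|W| <= |A| |V|] follows from Cauchy-Schwarz, [2 Re (det X) <= |X|^2] and
    [|A|^2 >= 2]. *)
From HB Require Import structures.
From mathcomp Require Import all_boot all_order all_algebra.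
From mathcomp Require Import all_classical all_reals all_analysis.
From mathcomp Require Import complex.
From mathcomp Require Import ring lra.
Import Order.TTheory GRing.Theory Num.Theory.
Import numFieldNormedType.Exports.
Local Open Scope ring_scope.
Local Open Scope classical_set_scope.

Lemma nonneg_quadratic_discriminant (F : realFieldType) (x y p : F) :
  (forall a b, 0 <= a ^+ 2 * x + 2 * a * b * p + b ^+ 2 * y) -> p ^+ 2 <= x * y.
Proof.
move=> h; have := h 0 1; rewrite !expr2 => y_ge0.
have [y_gt0 | y_eq0] := ltrP 0 y.
  by have := h y (- p); rewrite !expr2; nra.
have := h p (- (x + 1)); have := h 1 0; rewrite !expr2; nra.
Qed.

Lemma ler_term_sum {F : numDomainType} {I : finType} (G : I -> F) i :
  (forall k, 0 <= G k) -> G i <= \sum_k G k.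
Proof. by move=> G_ge0; rewrite (bigD1 i) //= lerDl sumr_ge0. Qed.

Section Polar2.
Context {R : realType}.
Local Notation C := R[i].
Local Notation M := 'M[R[i]]_2.
Local Notation Re := (@complex.Re R).
Local Notation Im := (@complex.Im R).

Lemma ord2_ind (P : 'I_2 -> Prop) : P 0 -> P 1 -> forall i, P i.
Proof.
move=> P0 P1 [[|[|//]] i2].
- by rewrite (_ : Ordinal i2 = 0) //; apply/val_inj.
- by rewrite (_ : Ordinal i2 = 1) //; apply/val_inj.
Qed.

Lemma mx2_eq (X Y : M) :
  X 0 0 = Y 0 0 -> X 0 1 = Y 0 1 -> X 1 0 = Y 1 0 -> X 1 1 = Y 1 1 -> X = Y.
Proof. by move=> h00 h01 h10 h11; apply/matrixP; apply: ord2_ind; apply: ord2_ind. Qed.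

Lemma big_ord2 (V : nmodType) (F : 'I_2 -> V) : \sum_(i < 2) F i = F 0 + F 1.
Proof. by rewrite big_ord_recl big_ord1; congr (_ + F _); apply: val_inj. Qed.

Lemma mulmx2E m p (X : 'M[C]_(m, 2)) (Y : 'M[C]_(2, p)) i j :
  (X *m Y) i j = X i 0 * Y 0 j + X i 1 * Y 1 j.
Proof. by rewrite !mxE big_ord2. Qed.

Lemma mxtrace2 (X : M) : \tr X = X 0 0 + X 1 1.
Proof. exact: big_ord2. Qed.

Lemma det2 (X : M) : \det X = X 0 0 * X 1 1 - X 0 1 * X 1 0.
Proof.
rewrite (expand_det_row _ 0) big_ord2 /cofactor !det_mx11 !mxE.
have -> : lift 0 0 = 1 :> 'I_2 by apply: val_inj.
have -> : lift 1 0 = 0 :> 'I_2 by apply: val_inj.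
by rewrite /= expr0 expr1 !mul1r mulN1r mulrN.
Qed.

Lemma adj2_00 (X : M) : \adj X 0 0 = X 1 1.
Proof.
by rewrite !mxE /cofactor det_mx11 !mxE /= expr0 mul1r; congr (X _ _); apply: val_inj.
Qed.
Lemma adj2_01 (X : M) : \adj X 0 1 = - X 0 1.
Proof.
by rewrite !mxE /cofactor det_mx11 !mxE /= expr1 mulN1r; congr (- X _ _); apply: val_inj.
Qed.
Lemma adj2_10 (X : M) : \adj X 1 0 = - X 1 0.
Proof.
by rewrite !mxE /cofactor det_mx11 !mxE /= expr1 mulN1r; congr (- X _ _); apply: val_inj.
Qed.
Lemma adj2_11 (X : M) : \adj X 1 1 = X 0 0.
Proof.
rewrite !mxE /cofactor det_mx11 !mxE /= expr2 mulN1r opprK mul1r.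
by congr (X _ _); apply: val_inj.
Qed.

Lemma ctmxE m n (X : 'M[C]_(m, n)) i j : ctmx X i j = (X j i)^*%C.
Proof. by rewrite !mxE. Qed.

Lemma ctmxK m n (X : 'M[C]_(m, n)) : ctmx (ctmx X) = X.
Proof. by apply/matrixP => i j; rewrite !ctmxE conjcK. Qed.

Lemma ctmxM m n p (X : 'M[C]_(m, n)) (Y : 'M[C]_(n, p)) :
  ctmx (X *m Y) = ctmx Y *m ctmx X.
Proof. by rewrite /ctmx map_mxM trmx_mul. Qed.

Lemma ctmx_adj n (X : 'M[C]_n) : ctmx (\adj X) = \adj (ctmx X).
Proof. by rewrite /ctmx map_mx_adj trmx_adj. Qed.

Lemma addmx_adj2 (X : M) : X + \adj X = (\tr X)%:M.
Proof.
apply: mx2_eq; rewrite ![(X + _) _ _]mxE ![_%:M _ _]mxE mxtrace2;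
  by rewrite ?adj2_00 ?adj2_01 ?adj2_10 ?adj2_11 /=; ring.
Qed.

Lemma adj2E (X : M) : \adj X = (\tr X)%:M - X.
Proof. by rewrite -(addmx_adj2 X) addrAC subrr add0r. Qed.

Lemma adj2M (X Y : M) : \adj (X *m Y) = \adj Y *m \adj X.
Proof.
rewrite !adj2E !mxtrace2; apply: mx2_eq; rewrite !(mxE, big_ord2) /=;
  by move: (X 0 0) (X 0 1) (X 1 0) (X 1 1) (Y 0 0) (Y 0 1) (Y 1 0) (Y 1 1) => *; ring.
Qed.

(* Locked because unifying [polar_num X] with [polar_num Y] would otherwise unfold both
   adjugates into their permutation expansions, which does not terminate in practice. *)
Fact polar_num_key : unit. Proof. by []. Qed.
Definition polar_num : M -> M :=
  locked_with polar_num_key (fun X => X + ctmx (\adj X)).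

Lemma polar_numE (X : M) : polar_num X = X + ctmx (\adj X).
Proof. by rewrite /polar_num unlock. Qed.

Lemma polar_num00 (X : M) : polar_num X 0 0 = X 0 0 + (X 1 1)^*%C.
Proof. by rewrite polar_numE mxE ctmxE adj2_00. Qed.
Lemma polar_num01 (X : M) : polar_num X 0 1 = X 0 1 - (X 1 0)^*%C.
Proof. by rewrite polar_numE mxE ctmxE adj2_10 rmorphN. Qed.
Lemma polar_num10 (X : M) : polar_num X 1 0 = X 1 0 - (X 0 1)^*%C.
Proof. by rewrite polar_numE mxE ctmxE adj2_01 rmorphN. Qed.
Lemma polar_num11 (X : M) : polar_num X 1 1 = X 1 1 + (X 0 0)^*%C.
Proof. by rewrite polar_numE mxE ctmxE adj2_11. Qed.

Lemma polar_numM (P U : M) :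
  ctmx P = P -> \adj U = ctmx U -> polar_num (P *m U) = \tr P *: U.
Proof.
move=> hP hU; rewrite polar_numE adj2M ctmxM hU ctmxK ctmx_adj hP.
by rewrite -mulmxDl addmx_adj2 mul_scalar_mx.
Qed.

Ltac mx2_coords X :=
  move: (X 0 0) (X 0 1) (X 1 0) (X 1 1) => [? ?] [? ?] [? ?] [? ?] /=.

Definition frob2 (X : M) : R :=
  \sum_(i < 2) \sum_(j < 2) (Re (X i j) ^+ 2 + Im (X i j) ^+ 2).

Lemma frobE (X : M) : frob X = Num.sqrt (frob2 X).
Proof. by []. Qed.

Lemma frob2_ge0 (X : M) : 0 <= frob2 X.
Proof. by do 2 (apply: sumr_ge0 => ? _); rewrite addr_ge0 ?sqr_ge0. Qed.

Lemma frob2E (X : M) : frob2 X =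
  Re (X 0 0) ^+ 2 + Im (X 0 0) ^+ 2 + Re (X 0 1) ^+ 2 + Im (X 0 1) ^+ 2 +
  Re (X 1 0) ^+ 2 + Im (X 1 0) ^+ 2 + Re (X 1 1) ^+ 2 + Im (X 1 1) ^+ 2.
Proof. by rewrite /frob2 !big_ord2; ring. Qed.

Lemma det_polar_num (X : M) :
  \det (polar_num X) = Complex (frob2 X + 2 * Re (\det X)) 0.
Proof.
rewrite !det2 polar_num00 polar_num01 polar_num10 polar_num11 frob2E.
mx2_coords X; apply/eqP; rewrite eq_complex /=; apply/andP; split; apply/eqP; ring.
Qed.

Lemma herm_pd_diag_gt0 (P : M) k : herm_pd P -> 0 < Re (P k k).
Proof.
case=> _ hpd.
have nz : delta_mx k 0 != 0 :> 'cV[C]_2.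
  by apply/eqP => /matrixP /(_ k 0) /eqP; rewrite !mxE !eqxx oner_eq0.
move: (hpd _ nz); rewrite !mulmx2E !ctmxE !mxE.
by move: k {nz}; apply: ord2_ind => /=; mx2_coords P; lra.
Qed.

Lemma herm_pd_trace {P : M} : herm_pd P -> exists2 c : R, 0 < c & \tr P = Complex c 0.
Proof.
move=> hP; have [hherm _] := hP.
have real_diag k : Im (P k k) = 0.
  have := congr1 (fun X : M => Im (X k k)) hherm; rewrite /= ctmxE.
  by case: (P k k) => ? ? /=; lra.
exists (Re (P 0 0) + Re (P 1 1)); first by rewrite addr_gt0 ?herm_pd_diag_gt0.
rewrite mxtrace2; move: (real_diag 0) (real_diag 1).
case: (P 0 0) (P 1 1) => ? ? [? ?] /= -> ->.
by apply/eqP; rewrite eq_complex /= addr0 !eqxx.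
Qed.

Lemma SU2_adj (U : M) : SU2 U -> \adj U = ctmx U.
Proof.
by case=> /mulmx1C hUU hdet; rewrite -[\adj U]mulmx1 -hUU mulmxA mul_adj_mx hdet mul1mx.
Qed.

Definition polar_scale (X : M) : R := (Num.sqrt (frob2 X + 2))^-1.

Lemma Pol2_formula {Pol1 Pol2 : M -> M} {A : M} :
  is_polar_decomp Pol1 Pol2 -> SL2 A -> Pol2 A = Complex (polar_scale A) 0 *: polar_num A.
Proof.
move=> hpol hA; have [[_ hP] hU hAPU] := hpol A hA.
have hB : polar_num A = \tr (Pol1 A) *: Pol2 A.
  by rewrite {1}hAPU; apply: polar_numM; [case: hP | exact: SU2_adj].
have [c c_gt0 hc] := herm_pd_trace hP.
have c2 : c ^+ 2 = frob2 A + 2.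
  have := det_polar_num A; rewrite hB detZ hc (proj2 hU) hA /=.
  by rewrite expr2 /= => -[h _]; rewrite expr2; lra.
have -> : polar_scale A = c^-1 by rewrite /polar_scale -c2 sqrtr_sqr gtr0_norm.
rewrite hB hc scalerA (_ : Complex c^-1 0 * Complex c 0 = 1) ?scale1r //.
have c_neq0 : c != 0 by rewrite gt_eqF.
by apply/eqP; rewrite eq_complex /= mulVf // !mulr0 mul0r subr0 addr0 !eqxx.
Qed.

Definition mxdot (X Y : M) : R :=
  \sum_(i < 2) \sum_(j < 2) (Re (X i j) * Re (Y i j) + Im (X i j) * Im (Y i j)).

Lemma mxdotE (X Y : M) : mxdot X Y =
  Re (X 0 0) * Re (Y 0 0) + Im (X 0 0) * Im (Y 0 0) +
  Re (X 0 1) * Re (Y 0 1) + Im (X 0 1) * Im (Y 0 1) +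
  Re (X 1 0) * Re (Y 1 0) + Im (X 1 0) * Im (Y 1 0) +
  Re (X 1 1) * Re (Y 1 1) + Im (X 1 1) * Im (Y 1 1).
Proof. by rewrite /mxdot !big_ord2; ring. Qed.

Lemma frob2_realD (a b : R) (X Y : M) :
  frob2 (Complex a 0 *: X + Complex b 0 *: Y) =
  a ^+ 2 * frob2 X + 2 * a * b * mxdot X Y + b ^+ 2 * frob2 Y.
Proof. by rewrite !frob2E mxdotE !mxE; mx2_coords X; mx2_coords Y; ring. Qed.

Lemma mxdot_CauchySchwarz (X Y : M) : mxdot X Y ^+ 2 <= frob2 X * frob2 Y.
Proof.
by apply: nonneg_quadratic_discriminant => a b; rewrite -frob2_realD frob2_ge0.
Qed.

Lemma Re_det_le_frob2 (X : M) : 2 * Re (\det X) <= frob2 X.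
Proof.
rewrite det2 frob2E.
move: (X 0 0) (X 0 1) (X 1 0) (X 1 1) => [a b] [c d] [e f] [g h] /=.
have := sqr_ge0 (a - g); have := sqr_ge0 (b + h); have := sqr_ge0 (c + e).
have := sqr_ge0 (d - f); rewrite !expr2; nra.
Qed.

Lemma frob2_polar_num (X : M) : frob2 (polar_num X) = 2 * frob2 X + 4 * Re (\det X).
Proof.
rewrite !frob2E det2 polar_num00 polar_num01 polar_num10 polar_num11.
by mx2_coords X; ring.
Qed.

Lemma frob2_ctmx_adj (X : M) : frob2 (ctmx (\adj X)) = frob2 X.
Proof.
rewrite !frob2E !ctmxE adj2_00 adj2_01 adj2_10 adj2_11.
by mx2_coords X; ring.
Qed.

Lemma mxdot_polar_num (A V : M) :
  mxdot (polar_num V) (polar_num A) = 2 * mxdot A V + 2 * mxdot (ctmx (\adj A)) V.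
Proof.
rewrite !mxdotE !polar_num00 !polar_num01 !polar_num10 !polar_num11.
rewrite !ctmxE adj2_00 adj2_01 adj2_10 adj2_11.
by mx2_coords A; mx2_coords V; ring.
Qed.

Lemma entry_sqr_le_frob2 (X : M) i j : Re (X i j) ^+ 2 + Im (X i j) ^+ 2 <= frob2 X.
Proof.
have entry_ge0 k l : 0 <= Re (X k l) ^+ 2 + Im (X k l) ^+ 2 by rewrite addr_ge0 ?sqr_ge0.
rewrite /frob2; apply: le_trans (ler_term_sum _ i _) => [|k]; last exact: sumr_ge0.
exact: ler_term_sum.
Qed.

Lemma entry_le_frob (X : M) i j : `|Re (X i j)| <= frob X /\ `|Im (X i j)| <= frob X.
Proof.
rewrite frobE -!sqrtr_sqr !ler_sqrt ?frob2_ge0 //.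
by split; apply: le_trans (entry_sqr_le_frob2 X i j); rewrite (lerDl, lerDr) sqr_ge0.
Qed.

Lemma ReD (u v : C) : Re (u + v) = Re u + Re v. Proof. by case: u v => ? ? []. Qed.
Lemma ImD (u v : C) : Im (u + v) = Im u + Im v. Proof. by case: u v => ? ? []. Qed.
Lemma ReN (u : C) : Re (- u) = - Re u. Proof. by case: u. Qed.
Lemma ImN (u : C) : Im (- u) = - Im u. Proof. by case: u. Qed.
Lemma ReJ (u : C) : Re u^*%C = Re u. Proof. by case: u. Qed.
Lemma ImJ (u : C) : Im u^*%C = - Im u. Proof. by case: u. Qed.
Lemma Re_realM (a : R) (u : C) : Re (Complex a 0 * u) = a * Re u.
Proof. by case: u => ? ? /=; ring. Qed.
Lemma Im_realM (a : R) (u : C) : Im (Complex a 0 * u) = a * Im u.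
Proof. by case: u => ? ? /=; ring. Qed.

Local Notation is_derive0 f df := (is_derive (0 : R) (1 : R) f df).

Lemma is_derive0P (h : R -> R) l :
  is_derive0 h l <-> (fun t => t^-1 * (h t - h 0) - l) @ 0^' --> (0 : R).
Proof.
have diffquotE : (fun t : R => t^-1 *: ((h \o shift 0) (t *: 1) - h 0)) =
                 (fun t => t^-1 * (h t - h 0)).
  by apply/funext => t /=; rewrite addr0 /GRing.scale /= mulr1.
split=> [[hd <-] | /subr_cvg0 hl].
  by apply/subr_cvg0; rewrite -diffquotE; exact: hd.
rewrite -diffquotE in hl; split; first by apply/cvg_ex; exists l.
exact: cvg_lim.
Qed.

Definition cderive0 (f : R -> C) (d : C) : Prop :=
  is_derive0 (fun t => Re (f t)) (Re d) /\ is_derive0 (fun t => Im (f t)) (Im d).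

Definition mx_derive0 (X : R -> M) (D : M) : Prop :=
  forall i j, cderive0 (fun t => X t i j) (D i j).

Lemma Re_diffquot (g : R -> M) V t i j :
  Re ((Complex t^-1 0 *: (g t - g 0) - V) i j) =
  t^-1 * (Re (g t i j) - Re (g 0 i j)) - Re (V i j).
Proof. by rewrite !mxE; case: (g t i j) (g 0 i j) (V i j) => ? ? [? ?] [? ?] /=; ring. Qed.

Lemma Im_diffquot (g : R -> M) V t i j :
  Im ((Complex t^-1 0 *: (g t - g 0) - V) i j) =
  t^-1 * (Im (g t i j) - Im (g 0 i j)) - Im (V i j).
Proof. by rewrite !mxE; case: (g t i j) (g 0 i j) (V i j) => ? ? [? ?] [? ?] /=; ring. Qed.

Lemma has_deriv0P (g : R -> M) (V : M) : has_deriv0 g V <-> mx_derive0 g V.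
Proof.
rewrite /has_deriv0; set Q := fun t => Complex t^-1 0 *: (g t - g 0) - V.
split=> [hg i j | hg].
  have squeeze (F : R -> R) : (forall t, `|F t| <= frob (Q t)) -> F @ 0^' --> (0 : R).
    move=> F_le; apply/norm_cvg0P; apply: (squeeze_cvgr _ (cvg_cst 0) hg).
    by apply: filterE => t; rewrite normr_ge0 F_le.
  split; apply/is_derive0P; apply: squeeze => t.
    by rewrite -Re_diffquot; case: (entry_le_frob (Q t) i j).
  by rewrite -Im_diffquot; case: (entry_le_frob (Q t) i j).
have entry_cvg i j : (fun t => Re (Q t i j)) @ 0^' --> (0 : R) /\
                     (fun t => Im (Q t i j)) @ 0^' --> (0 : R).
  have [/is_derive0P hr /is_derive0P hi] := hg i j.
  by split; [under eq_fun do rewrite Re_diffquot | under eq_fun do rewrite Im_diffquot].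
have frob2_cvg : (fun t => frob2 (Q t)) @ 0^' -->
                 \sum_(i < 2) \sum_(j < 2) (0 ^+ 2 + 0 ^+ 2 : R).
  apply: cvg_big => [|i _]; first exact: add_continuous.
  apply: cvg_big => [|j _]; first exact: add_continuous.
  by have [hr hi] := entry_cvg i j; apply: cvgD (cvgM hr hr) (cvgM hi hi).
rewrite big1 ?sqrtr0 in frob2_cvg => [|i _]; last first.
  by rewrite big1 // => j _; rewrite expr2 mulr0 addr0.
by have := cvg_comp _ _ frob2_cvg (@sqrt_continuous R 0); rewrite sqrtr0.
Qed.

Lemma cderive0D (f g : R -> C) a b :
  cderive0 f a -> cderive0 g b -> cderive0 (fun t => f t + g t) (a + b).
Proof.
move=> [fr fi] [gr gi]; rewrite /cderive0 ReD ImD.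
by split; [under eq_fun do rewrite ReD; exact: is_deriveD fr gr
          | under eq_fun do rewrite ImD; exact: is_deriveD fi gi].
Qed.

Lemma cderive0N (f : R -> C) a : cderive0 f a -> cderive0 (fun t => - f t) (- a).
Proof.
move=> [fr fi]; rewrite /cderive0 ReN ImN.
by split; [under eq_fun do rewrite ReN; exact: is_deriveN fr
          | under eq_fun do rewrite ImN; exact: is_deriveN fi].
Qed.

Lemma cderive0J (f : R -> C) a : cderive0 f a -> cderive0 (fun t => (f t)^*%C) a^*%C.
Proof.
move=> [fr fi]; rewrite /cderive0 ReJ ImJ.
by split; [under eq_fun do rewrite ReJ
          | under eq_fun do rewrite ImJ; exact: is_deriveN fi].
Qed.

Lemma cderive0_realM (s : R -> R) s' (f : R -> C) a :
  is_derive0 s s' -> cderive0 f a ->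
  cderive0 (fun t => Complex (s t) 0 * f t) (Complex (s 0) 0 * a + Complex s' 0 * f 0).
Proof.
move=> hs [fr fi]; rewrite /cderive0 ReD ImD !Re_realM !Im_realM.
split; [under eq_fun do rewrite Re_realM | under eq_fun do rewrite Im_realM].
  by apply: is_derive_eq (is_deriveM hs fr) _; rewrite /GRing.scale /= [_ * s']mulrC.
by apply: is_derive_eq (is_deriveM hs fi) _; rewrite /GRing.scale /= [_ * s']mulrC.
Qed.

Lemma mx_derive0_realZ (s : R -> R) s' (X : R -> M) (D : M) :
  is_derive0 s s' -> mx_derive0 X D ->
  mx_derive0 (fun t => Complex (s t) 0 *: X t)
             (Complex (s 0) 0 *: D + Complex s' 0 *: X 0).
Proof.
move=> hs hX i j; rewrite !mxE; under eq_fun do rewrite mxE.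
exact: cderive0_realM.
Qed.

Lemma mx_derive0_polar_num {X : R -> M} {D : M} :
  mx_derive0 X D -> mx_derive0 (fun t => polar_num (X t)) (polar_num D).
Proof.
move=> hX; apply: ord2_ind; apply: ord2_ind.
- rewrite polar_num00; under eq_fun do rewrite polar_num00.
  by apply: cderive0D; [|apply: cderive0J]; apply: hX.
- rewrite polar_num01; under eq_fun do rewrite polar_num01.
  by apply: cderive0D; [|apply/cderive0N/cderive0J]; apply: hX.
- rewrite polar_num10; under eq_fun do rewrite polar_num10.
  by apply: cderive0D; [|apply/cderive0N/cderive0J]; apply: hX.
- rewrite polar_num11; under eq_fun do rewrite polar_num11.
  by apply: cderive0D; [|apply: cderive0J]; apply: hX.
Qed.

Lemma is_derive0_frob2 {X : R -> M} {D : M} :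
  mx_derive0 X D -> is_derive0 (fun t => frob2 (X t)) (2 * mxdot (X 0) D).
Proof.
move=> hX.
have -> : (fun t => frob2 (X t)) =
          \sum_(i < 2) \sum_(j < 2) (fun t => Re (X t i j) ^+ 2 + Im (X t i j) ^+ 2).
  by apply/funext => t; rewrite fct_sumE; apply: eq_bigr => i _; rewrite fct_sumE.
apply: is_derive_eq.
  apply: is_derive_sum => i; apply: is_derive_sum => j.
  by have [hr hi] := hX i j; exact: is_deriveD (is_deriveX 2 hr) (is_deriveX 2 hi).
rewrite /mxdot mulr_sumr; apply: eq_bigr => i _; rewrite mulr_sumr; apply: eq_bigr => j _.
by rewrite /GRing.scale /=; ring.
Qed.

Lemma is_derive0_polar_scale {X : R -> M} {D : M} : mx_derive0 X D ->
  is_derive0 (fun t => polar_scale (X t)) (- mxdot (X 0) D * polar_scale (X 0) ^+ 3).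
Proof.
move=> hX; have frob2_gt0 : 0 < frob2 (X 0) + 2 by rewrite ltr_wpDl ?frob2_ge0.
set s := Num.sqrt (frob2 (X 0) + 2).
have s_neq0 : s != 0 by rewrite gt_eqF ?sqrtr_gt0.
have hs : is_derive0 (fun t => Num.sqrt (frob2 (X t) + 2))
                     ((2 * s)^-1 * (2 * mxdot (X 0) D + 0)).
  have hfrob2 := is_deriveD (is_derive0_frob2 hX) (is_derive_cst (2 : R) (0 : R) (1 : R)).
  exact: (@is_derive1_comp _ Num.sqrt (fun t => frob2 (X t) + 2) 0 _ _
                           (is_derive1_sqrt frob2_gt0) hfrob2).
have := @is_deriveV R (fun t => Num.sqrt (frob2 (X t) + 2)) 0 _ 1 s_neq0 hs.
move/is_derive_eq; apply.
by rewrite /polar_scale -/s /GRing.scale /=; field.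
Qed.

Definition dPol2 (A V : M) : M :=
  Complex (polar_scale A) 0 *: polar_num V +
  Complex (- mxdot A V * polar_scale A ^+ 3) 0 *: polar_num A.

Lemma has_deriv0_unitary_factor (g : R -> M) (V : M) : has_deriv0 g V ->
  has_deriv0 (fun t => Complex (polar_scale (g t)) 0 *: polar_num (g t)) (dPol2 (g 0) V).
Proof.
move=> /has_deriv0P hg; apply/has_deriv0P.
exact: mx_derive0_realZ (is_derive0_polar_scale hg) (mx_derive0_polar_num hg).
Qed.

Lemma frob_dPol2 (A V : M) : Re (\det A) = 1 -> frob (dPol2 A V) <= frob A * frob V.
Proof.
move=> detA; rewrite !frobE -sqrtrM ?frob2_ge0 // ler_sqrt ?mulr_ge0 ?frob2_ge0 //.
rewrite /dPol2 frob2_realD !frob2_polar_num mxdot_polar_num detA.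
set x := frob2 A; set y := frob2 V; set r := mxdot A V; set d := mxdot _ V.
set w := polar_scale A ^+ 2.
have x_ge2 : 2 <= x by have := Re_det_le_frob2 A; rewrite detA mulr1.
have y_ge0 : 0 <= y := frob2_ge0 V.
have dV_le : 2 * Re (\det V) <= y := Re_det_le_frob2 V.
have d_le : d ^+ 2 <= x * y by rewrite -[x](frob2_ctmx_adj A); apply: mxdot_CauchySchwarz.
have w_ge0 : 0 <= w := sqr_ge0 _.
have x2_gt0 : 0 < x + 2 by rewrite ltr_wpDl ?frob2_ge0.
have wx : w * (x + 2) = 1.
  by rewrite /w /polar_scale exprVn sqr_sqrtr ?ltW // mulVf ?gt_eqF.
have -> : polar_scale A ^+ 2 * (2 * y + 4 * Re (\det V)) +
          2 * polar_scale A * (- r * polar_scale A ^+ 3) * (2 * r + 2 * d) +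
          (- r * polar_scale A ^+ 3) ^+ 2 * (2 * x + 4 * 1) =
          w * (2 * y + 4 * Re (\det V)) - w ^+ 2 * (2 * r ^+ 2 + 4 * r * d)
          + 2 * r ^+ 2 * w ^+ 2 * (w * (x + 2) - 1) by rewrite /w; ring.
rewrite wx subrr mulr0 addr0.
have w_le : 4 * w <= 1 by nra.
have first_le : w * (2 * y + 4 * Re (\det V)) <= y by nra.
have cross_le : - (2 * r ^+ 2 + 4 * r * d) <= 2 * (x * y).
  by have := sqr_ge0 (r + d); rewrite !expr2 in d_le *; nra.
have xy_ge0 : 0 <= x * y by rewrite mulr_ge0 // (le_trans _ x_ge2).
have second_le : - (w ^+ 2 * (2 * r ^+ 2 + 4 * r * d)) <= x * y / 8.
  rewrite -mulrN; apply: le_trans (ler_wpM2l (sqr_ge0 w) cross_le) _.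
  have w2_le : 16 * (w * w) <= 1 by nra.
  have : 0 <= (1 - 16 * (w * w)) * (x * y) by rewrite mulr_ge0 // subr_ge0.
  by rewrite expr2; lra.
have : 0 <= (x - 2) * y by rewrite mulr_ge0 // subr_ge0.
lra.
Qed.

End Polar2.

Theorem proposition13 (R : realType) (Pol1 Pol2 : 'M[R[i]]_2 -> 'M[R[i]]_2) :
  is_polar_decomp Pol1 Pol2 ->
  forall A : 'M[R[i]]_2, SL2 A ->
  forall (g : R -> 'M[R[i]]_2) (V : 'M[R[i]]_2),
    (forall t, SL2 (g t)) -> g 0 = A -> has_deriv0 g V ->
    exists W : 'M[R[i]]_2,
      has_deriv0 (Pol2 \o g) W /\ frob W <= frob A * frob V.
Proof.
move=> hpol A hA g V hg hgA hV.
exists (dPol2 A V); split; last by apply: frob_dPol2; rewrite hA.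
have -> : Pol2 \o g = fun t => Complex (polar_scale (g t)) 0 *: polar_num (g t).
  by apply/funext => t; exact: Pol2_formula hpol (hg t).
by rewrite -hgA; exact: has_deriv0_unitary_factor.
Qed.
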